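(* Let $k\geq 2$ be an integer and let $P$ be a finite poset of width $w$ that does not contain $\mathbf{k}+\mathbf{k}$ as an induced subposet. Then $P$ extends some interval order $Q$ of width at most $(2k-3)w$.
   Context: The width of a poset is the maximum size of an antichain. $\mathbf{k}+\mathbf{k}$ denotes the poset consisting of two disjoint chains $A,B$ with $|A|=|B|=k$ in which every element of $A$ is incomparable with every element of $B$; ''$P$ does not contain $\mathbf{k}+\mathbf{k}$'' means $P$ has no induced subposet isomorphic to it, i.e. there are no two disjoint chains of size $k$ in $P$ such that every element of one is incomparable to every element of the other. A poset $P$ extends a poset $Q$ if they have the same ground set and $u<v$ in $Q$ implies $u<v$ in $P$. A poset is an interval order if there is an assignment of closed real intervals $I(u)$ to its elements such that $u<v$ if and only if $I(u)=[a,b]$, $I(v)=[c,d]$ with $b<c$. *)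

From Stdlib Require Import Reals.
From mathcomp Require Import all_boot.
Set Implicit Arguments. Unset Strict Implicit. Unset Printing Implicit Defensive.

Definition strict_order (T : finType) (lt : rel T) : Prop :=
  (forall x, ~~ lt x x) /\ (forall x y z, lt x y -> lt y z -> lt x z).

Definition comparable (T : finType) (lt : rel T) (x y : T) : bool :=
  [|| x == y, lt x y | lt y x].

Definition is_chain (T : finType) (lt : rel T) (A : {set T}) : bool :=
  [forall x in A, forall y in A, comparable lt x y].

Definition is_antichain (T : finType) (lt : rel T) (A : {set T}) : bool :=
  [forall x in A, forall y in A, (x != y) ==> ~~ comparable lt x y].

Definition width (T : finType) (lt : rel T) : nat :=
  \max_(A : {set T} | is_antichain lt A) #|A|.

Definition contains_kk (T : finType) (lt : rel T) (k : nat) : Prop :=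
  exists A B : {set T},
    [/\ is_chain lt A, is_chain lt B, #|A| = k, #|B| = k &
        [disjoint A & B]] /\
        (forall a b, a \in A -> b \in B -> ~~ comparable lt a b).

Definition interval_order (T : finType) (lt : rel T) : Prop :=
  exists l r : T -> R,
    (forall x, Rle (l x) (r x)) /\
    (forall x y, lt x y <-> Rlt (r x) (l y)).

Definition extends (T : finType) (ltP ltQ : rel T) : Prop :=
  forall u v, ltQ u v -> ltP u v.

From Pilot Require Import Defs.
From Stdlib Require Import Reals.
From mathcomp Require Import all_boot.
From mathcomp Require Import zify.
Set Implicit Arguments. Unset Strict Implicit. Unset Printing Implicit Defensive.

(* Write k = m + 2.  Let f v count the u from which a k-element chain climbs
   to v, and let r x be the largest f z over the z not above x; the intervals
   [f x, r x] define an interval order Q extended by P.  If a maximises f on a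
   Q-antichain A, then f v <= f a <= r u for all u, v in A.  A chain of 2k - 2
   elements from u to v splits as u .. xa < xb .. v with k - 1 elements in
   each part; let z realise r u.  Every u' counted by f z lies below xb, since
   otherwise the chains u' .. z and u .. xb form a k + k, so u' is counted by
   f v; and xa is counted by f v but not by f z.  Thus f v > f z = r u, a
   contradiction, so the chains in A have at most 2k - 3 elements and Mirsky's
   theorem covers A by 2k - 3 antichains of P. *)

Lemma card_leq_levels (T : finType) (A : {set T}) (g : T -> nat) N w :
  {in A, forall x, g x < N} -> (forall j, #|[set x in A | g x == j]| <= w) ->
  #|A| <= N * w.
Proof.
elim: N A => [|N IH] A g_lt level_le.
  rewrite leqn0 cards_eq0; apply/eqP/setP => x.
  by rewrite inE; apply/negbTE/negP => /g_lt.
have -> : A = [set x in A | g x == N] :|: [set x in A | g x < N].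
  apply/setP => x; rewrite !inE; case xA: (x \in A) => //=.
  by rewrite -leq_eqVlt -ltnS g_lt.
rewrite mulSn; apply: leq_trans (leq_card_setU _ _) (leq_add (level_le N) _).
apply: IH => [x | j]; first by rewrite inE => /andP [].
apply: leq_trans (level_le j); apply: subset_leq_card; apply/subsetP => x.
by rewrite !inE => /andP [/andP [-> _] ->].
Qed.

Definition interval_rel (T : Type) (l r : T -> nat) : rel T := fun x y => r x < l y.

Section IntervalRel.

Variables (T : finType) (l r : T -> nat).
Hypothesis l_le_r : forall x, l x <= r x.

Lemma interval_rel_strict_order : strict_order (interval_rel l r).
Proof.
split=> [x | x y z xy yz]; first by rewrite /interval_rel -leqNgt.
exact: ltn_trans xy (leq_ltn_trans (l_le_r y) yz).
Qed.

Lemma interval_rel_interval_order : interval_order (interval_rel l r).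
Proof.
exists (fun x => INR (l x)), (fun x => INR (r x)); split=> [x | x y].
  by apply/le_INR/ssrnat.leP.
by split=> [/ssrnat.ltP/lt_INR | /INR_lt/ssrnat.ltP].
Qed.

End IntervalRel.

Section Walks.

Variables (T : finType) (lt : rel T).

Fixpoint reach (j : nat) (u v : T) : bool :=
  if j is j'.+1 then [exists w, lt u w && reach j' w v] else u == v.

Lemma reachD a b u v :
  reach (a + b) u v <-> exists w, reach a u w /\ reach b w v.
Proof.
elim: a u => [|a IH] u /=.
  by split => [h | [w [/eqP -> h]]] //; exists u; rewrite eqxx.
split.
  case/existsP => w /andP [uw /IH [w' [h1 h2]]]; exists w'; split => //.
  by apply/existsP; exists w; rewrite uw h1.
case=> w' [/existsP [w /andP [uw h1]] h2]; apply/existsP; exists w.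
by rewrite uw /=; apply/IH; exists w'.
Qed.

Lemma reach1 u v : reach 1 u v = lt u v.
Proof.
apply/existsP/idP => [[w /andP [uw /eqP <-]] // | uv].
by exists v; rewrite uv eqxx.
Qed.

Lemma reachSr j u w v : reach j u w -> lt w v -> reach j.+1 u v.
Proof. by move=> uw wv; rewrite -addn1; apply/reachD; exists w; rewrite reach1. Qed.

Lemma reachSl j u w v : lt u w -> reach j w v -> reach j.+1 u v.
Proof. by move=> uw wv; apply/existsP; exists w; rewrite uw. Qed.

Lemma chainP (A : {set T}) :
  reflect {in A &, forall x y, Defs.comparable lt x y} (is_chain lt A).
Proof.
apply: (iffP forallP) => [H x y xA yA | H x].
  by move/implyP: (H x) => /(_ xA) /forallP /(_ y) /implyP /(_ yA).
by apply/implyP => xA; apply/forallP => y; apply/implyP; apply: H.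
Qed.

Lemma antichainP (A : {set T}) :
  reflect {in A &, forall x y, x != y -> ~~ Defs.comparable lt x y}
          (is_antichain lt A).
Proof.
apply: (iffP forallP) => [H x y xA yA | H x].
  by move/implyP: (H x) => /(_ xA) /forallP /(_ y) /implyP /(_ yA) /implyP.
apply/implyP => xA; apply/forallP => y; apply/implyP => yA.
by apply/implyP; apply: H.
Qed.

Lemma card_leq_width (A : {set T}) : is_antichain lt A -> #|A| <= width lt.
Proof. by move=> hA; rewrite /width (leq_bigmax_cond _ hA). Qed.

(* Mirsky: the level of x is the length of the longest walk from A to x; the
   levels are below N and each of them is an antichain. *)
Lemma mirsky_card_leq N (A : {set T}) :
  0 < N -> {in A &, forall u v, ~~ reach N u v} -> #|A| <= N * width lt.
Proof.
move=> N_gt0 noreach.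
pose P x (j : 'I_N) := [exists u in A, reach j u x].
pose g x := \max_(j : 'I_N | P x j) (nat_of_ord j).
have g_ltN x : g x < N.
  by rewrite -(prednK N_gt0) ltnS; apply/bigmax_leqP => j _; rewrite -ltnS prednK.
have g_reach x : x \in A -> exists2 u, u \in A & reach (g x) u x.
  move=> xA; have Px0 : P x (Ordinal N_gt0) by apply/existsP; exists x; rewrite xA /=.
  have [j Pj j_max] := arg_maxnP (fun j : 'I_N => nat_of_ord j) Px0.
  have -> : g x = j.
    by apply/eqP; rewrite eqn_leq (leq_bigmax_cond _ Pj) andbT; apply/bigmax_leqP.
  by case/existsP: Pj => u /andP [uA hu]; exists u.
have g_mono : {in A &, forall x y, lt x y -> g x < g y}.
  move=> x y xA yA xy; have [u uA hu] := g_reach x xA.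
  have uy := reachSr hu xy.
  case: (ltnP (g x).+1 N) => [lt_gN | ]; last first.
    rewrite leq_eqVlt ltnNge g_ltN orbF => /eqP eN.
    by move: (noreach u y uA yA); rewrite eN uy.
  have Py : P y (Ordinal lt_gN) by apply/existsP; exists u; rewrite uA.
  exact: (leq_bigmax_cond _ Py).
apply: (card_leq_levels (g := g)) => [x _ | j]; first exact: g_ltN.
apply/card_leq_width/antichainP => x y; rewrite !inE.
move=> /andP [xA /eqP gx] /andP [yA /eqP gy] xy.
rewrite /Defs.comparable (negbTE xy) /=; apply/norP.
by split; apply/negP; [move/(g_mono _ _ xA yA) | move/(g_mono _ _ yA xA)];
  rewrite gx gy ltnn.
Qed.

Lemma contains_kk_of_incomparable k (X Y : {set T}) :
  is_chain lt X -> is_chain lt Y -> #|X| = k -> #|Y| = k ->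
  {in X & Y, forall x y, ~~ Defs.comparable lt x y} -> contains_kk lt k.
Proof.
move=> chX chY cX cY incXY; exists X, Y; split => //; split => //.
rewrite disjoint_subset; apply/subsetP => x xX; rewrite inE; apply/negP => xY.
by move: (incXY x x xX xY); rewrite /Defs.comparable eqxx.
Qed.

End Walks.

Section StrictOrder.

Variables (T : finType) (lt : rel T).
Hypotheses (lt_irr : irreflexive lt) (lt_trans : transitive lt).

Local Notation reach := (reach lt).

Definition lte x y := (x == y) || lt x y.

Lemma lte_lt_trans x y z : lte x y -> lt y z -> lt x z.
Proof. by case/orP => [/eqP -> // | xy yz]; apply: lt_trans yz. Qed.

Lemma lt_lte_trans x y z : lt x y -> lte y z -> lt x z.
Proof. by move=> xy /orP [/eqP <- // | yz]; apply: lt_trans yz. Qed.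

Lemma lte_trans x y z : lte x y -> lte y z -> lte x z.
Proof.
by case/orP => [/eqP -> // | xy] yz; rewrite /lte (lt_lte_trans xy yz) orbT.
Qed.

Lemma reachS_lt j u v : reach j.+1 u v -> lt u v.
Proof.
elim: j u => [|j IH] u; first by rewrite reach1.
by case/existsP => w /andP [uw /IH wv]; apply: lt_trans wv.
Qed.

Lemma reach_lte j u v : reach j u v -> lte u v.
Proof. by case: j => [/eqP -> | j /reachS_lt uv]; rewrite /lte ?eqxx ?uv ?orbT. Qed.

Lemma reach_chain j u v : reach j u v ->
  exists2 S : {set T}, is_chain lt S /\ #|S| = j.+1 &
    {in S, forall s, lte u s && lte s v}.
Proof.
elim: j u => [|j IH] u /=.
  move/eqP <-; exists [set u]; last by move=> s /set1P ->; rewrite /lte eqxx.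
  split; last exact: cards1.
  by apply/chainP => x y /set1P -> /set1P ->; rewrite /Defs.comparable eqxx.
case/existsP => w /andP [uw /[dup] wv /IH [S [chS cS] S_btw]].
have uS s : s \in S -> lt u s by move/S_btw => /andP [ws _]; apply: lt_lte_trans ws.
have uv : lt u v := reachS_lt (reachSl uw wv).
exists (u |: S); first split.
- apply/chainP => x y /setU1P [-> | xS] /setU1P [-> | yS].
  + by rewrite /Defs.comparable eqxx.
  + by rewrite /Defs.comparable uS ?orbT.
  + by rewrite /Defs.comparable uS ?orbT.
  + by move/chainP: chS; apply.
- by rewrite cardsU1 cS; case: (boolP (u \in S)) => // /uS; rewrite lt_irr.
- move=> s /setU1P [-> | /[dup] /uS us /S_btw /andP [_ sv]].
  by rewrite /lte eqxx uv orbT.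
by rewrite sv andbT /lte us orbT.
Qed.

(* The chains x .. x' and u .. u' are then mutually incomparable. *)
Lemma contains_kk_of_reach m x x' u u' :
  reach m.+1 x x' -> reach m.+1 u u' -> ~~ lt x u' -> ~~ lt u x' ->
  contains_kk lt m.+2.
Proof.
move=> xx' uu' xu' ux'.
have [X [chX cX] X_btw] := reach_chain xx'.
have [U [chU cU] U_btw] := reach_chain uu'.
apply: (contains_kk_of_incomparable chX chU cX cU) => a s aX sU.
have /andP [xa ax'] := X_btw a aX; have /andP [us su'] := U_btw s sU.
rewrite /Defs.comparable; apply/negP => /or3P [/eqP eas | as_ | sa].
- subst a.
  case/orP: (lte_trans xa su') => [/eqP exu' | xu'_lt];
    last by rewrite xu'_lt in xu'.
  have ux : lt u x by rewrite exu'; exact: reachS_lt uu'.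
  by rewrite (lt_trans ux (reachS_lt xx')) in ux'.
- by move: xu'; rewrite (lt_lte_trans (lte_lt_trans xa as_) su').
- by move: ux'; rewrite (lt_lte_trans (lte_lt_trans us sa) ax').
Qed.

Definition left_end k v := #|[set u | reach k.-1 u v]|.

Definition right_end k x := \max_(z | ~~ lt x z) left_end k z.

Definition interval_lt k := interval_rel (left_end k) (right_end k).

Lemma left_end_leq_right_end k x : left_end k x <= right_end k x.
Proof. by apply: leq_bigmax_cond; rewrite lt_irr. Qed.

Lemma interval_lt_extends k : extends lt (interval_lt k).
Proof.
move=> x y; apply: contraTT => xy.
by rewrite /interval_lt /interval_rel -leqNgt; apply: leq_bigmax_cond.
Qed.

Lemma no_reach_below_right_end m x y :
  ~ contains_kk lt m.+2 -> left_end m.+2 y <= right_end m.+2 x ->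
  ~~ reach (m + (1 + m)) x y.
Proof.
move=> nokk yx; apply/negP => /reachD [xa [x_xa /reachD [xb [xa_xb xb_y]]]].
rewrite reach1 in xa_xb.
have [z xz z_max] :=
  @arg_maxnP _ x (fun z => ~~ lt x z) (left_end m.+2) (negbT (lt_irr x)).
have x_xb : reach m.+1 x xb := reachSr x_xa xa_xb.
have sub : [set u | reach m.+1 u z] \proper [set u | reach m.+1 u y].
  apply/properP; split.
    apply/subsetP => u; rewrite !inE => uz.
    have [u_xb | nu_xb] := boolP (lt u xb); first exact: reachSl u_xb xb_y.
    by case: nokk; apply: contains_kk_of_reach x_xb uz xz nu_xb.
  exists xa; rewrite inE; first exact: reachSl xa_xb xb_y.
  apply/negP => /reachS_lt xaz.
  by rewrite (lte_lt_trans (reach_lte x_xa) xaz) in xz.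
have := proper_card sub; rewrite ltnNge => /negP; apply.
by apply: leq_trans yx _; apply/bigmax_leqP => i; apply: z_max.
Qed.

Lemma width_interval_lt m :
  ~ contains_kk lt m.+2 -> width (interval_lt m.+2) <= (m + (1 + m)) * width lt.
Proof.
move=> nokk; apply/bigmax_leqP => A /antichainP A_anti.
have [-> | [a0 a0A]] := set_0Vmem A; first by rewrite cards0.
have [a aA a_max] := arg_maxnP (left_end m.+2) a0A.
apply: mirsky_card_leq => [|u v uA vA]; first by rewrite addnCA addSn.
apply: no_reach_below_right_end nokk (leq_trans (a_max v vA) _).
have [-> | ua] := eqVneq u a; first exact: left_end_leq_right_end.
have := A_anti u a uA aA ua; rewrite /Defs.comparable (negbTE ua) /= negb_or.
by case/andP; rewrite /interval_lt /interval_rel -leqNgt.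
Qed.

End StrictOrder.

Theorem theorem1 (k : nat) (T : finType) (ltP : rel T) :
  2 <= k -> strict_order ltP -> ~ contains_kk ltP k ->
  exists ltQ : rel T,
    [/\ strict_order ltQ, interval_order ltQ, extends ltP ltQ &
        width ltQ <= (2 * k - 3) * width ltP].
Proof.
case: k => [|[|m]] // _ [irr trans] nokk.
have lt_irr : irreflexive ltP by move=> x; apply/negbTE.
have lt_trans : transitive ltP by move=> y x z; apply: trans.
have l_le_r := left_end_leq_right_end lt_irr m.+2.
exists (interval_lt ltP m.+2); split.
- exact: interval_rel_strict_order.
- exact: interval_rel_interval_order.
- exact: interval_lt_extends.
- have -> : 2 * m.+2 - 3 = m + (1 + m) by lia.
  exact: width_interval_lt.
Qed.
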